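(* For every closed type $A$ and every semantic value $v\in[\![A]\!]$ there is a closed term $\emptyset\vdash \mathrm{reify}(v):A$ such that $[\![\mathrm{reify}(v)]\!]=v$.
   Context: Types: $A,B ::= X \mid A\to B \mid A_1\times A_2 \mid 1 \mid A_1+A_2 \mid 0$ ($X$ atomic); a closed type is one containing no atomic types. Terms: $x \mid \lambda x.t \mid t\,u \mid (t_1,t_2) \mid \pi_i t \mid () \mid \sigma_i t \mid \mathtt{match}\ t\ \mathtt{with}\ (\sigma_1 x_1\to u_1 \mid \sigma_2 x_2\to u_2) \mid \mathtt{absurd}(t)$ with standard simple typing; $\mathtt{absurd}(t):A$ for any $A$ when $t:0$. Closed types denote sets: $[\![A\to B]\!]$ = total functions $[\![A]\!]\to[\![B]\!]$, $[\![A\times B]\!]$ = cartesian product, $[\![1]\!]=\{\star\}$, $[\![A+B]\!]=\{(1,a)\mid a\in[\![A]\!]\}\uplus\{(2,b)\mid b\in[\![B]\!]\}$, $[\![0]\!]=\emptyset$. For a closed term $\emptyset\vdash t:A$, $[\![t]\!]\in[\![A]\!]$ is its standard set-theoretic interpretation. *)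

From Stdlib Require Import List.
Import ListNotations.

Inductive ty : Type :=
| TAtom : nat -> ty
| TArr  : ty -> ty -> ty
| TProd : ty -> ty -> ty
| TUnit : ty
| TSum  : ty -> ty -> ty
| TEmpty : ty.

Fixpoint closed_ty (A : ty) : bool :=
  match A with
  | TAtom _ => false
  | TArr A B | TProd A B | TSum A B => closed_ty A && closed_ty B
  | TUnit | TEmpty => true
  end.

Definition ctx := list ty.

Inductive var : ctx -> ty -> Type :=
| vz : forall G A, var (A :: G) A
| vs : forall G A B, var G A -> var (B :: G) A.

Inductive tm : ctx -> ty -> Type :=
| tvar  : forall G A, var G A -> tm G A
| tlam  : forall G A B, tm (A :: G) B -> tm G (TArr A B)
| tapp  : forall G A B, tm G (TArr A B) -> tm G A -> tm G B
| tpair : forall G A B, tm G A -> tm G B -> tm G (TProd A B)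
| tfst  : forall G A B, tm G (TProd A B) -> tm G A
| tsnd  : forall G A B, tm G (TProd A B) -> tm G B
| tunit : forall G, tm G TUnit
| tinl  : forall G A B, tm G A -> tm G (TSum A B)
| tinr  : forall G A B, tm G B -> tm G (TSum A B)
| tmatch : forall G A B C, tm G (TSum A B) -> tm (A :: G) C -> tm (B :: G) C -> tm G C
| tabsurd : forall G C, tm G TEmpty -> tm G C.

Fixpoint sem (rho : nat -> Type) (A : ty) : Type :=
  match A with
  | TAtom n => rho n
  | TArr A B => sem rho A -> sem rho B
  | TProd A B => (sem rho A * sem rho B)%type
  | TUnit => unit
  | TSum A B => (sem rho A + sem rho B)%type
  | TEmpty => Empty_set
  end.

Fixpoint env (rho : nat -> Type) (G : ctx) : Type :=
  match G with
  | [] => unit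
  | A :: G' => (sem rho A * env rho G')%type
  end.

Fixpoint lookup {rho : nat -> Type} {G A} (x : var G A) : env rho G -> sem rho A :=
  match x in var G A return env rho G -> sem rho A with
  | vz _ _ => fun e => fst e
  | vs _ _ _ y => fun e => lookup y (snd e)
  end.

Fixpoint eval {rho : nat -> Type} {G A} (t : tm G A) : env rho G -> sem rho A :=
  match t in tm G A return env rho G -> sem rho A with
  | tvar _ _ x => fun e => lookup x e
  | tlam _ _ _ b => fun e => fun a => eval b (a, e)
  | tapp _ _ _ f u => fun e => (eval f e) (eval u e)
  | tpair _ _ _ u w => fun e => (eval u e, eval w e)
  | tfst _ _ _ u => fun e => fst (eval u e)
  | tsnd _ _ _ u => fun e => snd (eval u e)
  | tunit _ => fun _ => tt
  | tinl _ _ _ u => fun e => inl (eval u e)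
  | tinr _ _ _ u => fun e => inr (eval u e)
  | tmatch _ _ _ _ s u1 u2 => fun e =>
      match eval s e with
      | inl a => eval u1 (a, e)
      | inr b => eval u2 (b, e)
      end
  | tabsurd _ _ s => fun e => match eval s e with end
  end.

Definition denote {rho : nat -> Type} {A} (t : tm [] A) : sem rho A := eval t tt.

(* Call a type A case-definable if every function out of [[A]] all of whose
   values are definable is itself definable.  By induction on closed types,
   [[A]] is finite, every value of A is definable, and A is case-definable:
   a function value is definable because its domain is case-definable and
   its values are definable; case analysis on products is currying and on
   sums is [match].  For an arrow type A1 -> A2, a function F of g factors as
   F g = Phi (g a1, ..., g an) through the finitely many definable points
   a1, ..., an of [[A1]], and Phi is definable by nested case analysis on A2.
   The degenerate case is an empty arrow type (A1 inhabited, A2 empty), where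
   F g is a vacuous case analysis on g a1. *)

From Stdlib Require Import List ClassicalEpsilon FunctionalExtensionality.
Import ListNotations.

Definition enumerable (X : Type) : Prop := exists l : list X, forall x, In x l.

Lemma map_cover {X Y : Type} (l : list X) (lY : list Y) :
  (forall y, In y lY) -> exists L : list (list Y), forall g : X -> Y, In (map g l) L.
Proof.
  intros HlY. induction l as [|a l [L HL]].
  - exists [[]]. intros g. now left.
  - exists (map (fun p => fst p :: snd p) (list_prod lY L)). intros g.
    apply (in_map (fun p => fst p :: snd p) _ (g a, map g l)).
    now apply in_prod.
Qed.

Lemma epsilon_map_complete {X Y : Type} (l : list X) (i : inhabited (X -> Y)) (g : X -> Y) :
  (forall x, In x l) -> epsilon i (fun h => map h l = map g l) = g.
Proof.
  intros Hl. apply functional_extensionality. intros x.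
  apply (proj1 (map_ext_in_iff (l := l))); [|apply Hl].
  apply (epsilon_spec i (fun h => map h l = map g l)). now exists g.
Qed.

Lemma enumerable_arrow {X Y : Type} : enumerable X -> enumerable Y -> enumerable (X -> Y).
Proof.
  intros [lX HlX] [lY HlY].
  destruct (classic (inhabited (X -> Y))) as [i|Hempty].
  - destruct (map_cover lX lY HlY) as [L HL].
    exists (map (fun bs => epsilon i (fun h => map h lX = bs)) L). intros g.
    apply in_map_iff. exists (map g lX).
    split; [now apply epsilon_map_complete | apply HL].
  - exists []. intros g. apply Hempty. now constructor.
Qed.

Lemma enumerable_prod {X Y : Type} : enumerable X -> enumerable Y -> enumerable (X * Y).
Proof.
  intros [lX HlX] [lY HlY]. exists (list_prod lX lY). intros [x y]. now apply in_prod.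
Qed.

Lemma enumerable_sum {X Y : Type} : enumerable X -> enumerable Y -> enumerable (X + Y).
Proof.
  intros [lX HlX] [lY HlY]. exists (map inl lX ++ map inr lY).
  intros [x|y]; apply in_app_iff; [left|right]; now apply in_map.
Qed.

Lemma enumerable_unit : enumerable unit.
Proof. exists [tt]. intros []. now left. Qed.

Lemma enumerable_Empty_set : enumerable Empty_set.
Proof. exists []. intros []. Qed.

Section Definability.

Variable rho : nat -> Type.

Definition definable (A : ty) (v : sem rho A) : Prop :=
  exists t : tm [] A, denote (rho := rho) t = v.

Definition all_definable (A : ty) : Prop := forall v : sem rho A, definable A v.

Definition case_definable (A : ty) : Prop :=
  forall C (F : sem rho A -> sem rho C),
  (forall a, definable C (F a)) -> definable (TArr A C) F.

Lemma definable_app A B (f : sem rho (TArr A B)) (a : sem rho A) :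
  definable (TArr A B) f -> definable A a -> definable B (f a).
Proof. intros [t <-] [u <-]. now exists (tapp _ _ _ t u). Qed.

Lemma definable_pair A B (a : sem rho A) (b : sem rho B) :
  definable A a -> definable B b -> definable (TProd A B) (a, b).
Proof. intros [t <-] [u <-]. now exists (tpair _ _ _ t u). Qed.

Lemma definable_inl A B (a : sem rho A) : definable A a -> definable (TSum A B) (inl a).
Proof. intros [t <-]. now exists (tinl _ _ _ t). Qed.

Lemma definable_inr A B (b : sem rho B) : definable B b -> definable (TSum A B) (inr b).
Proof. intros [t <-]. now exists (tinr _ _ _ t). Qed.

Lemma definable_const A C : definable (TArr C (TArr A C)) (fun c _ => c).
Proof. now exists (tlam _ _ _ (tlam _ _ _ (tvar _ _ (vs _ _ _ (vz _ _))))). Qed.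

Lemma definable_uncurry A B C :
  definable (TArr (TArr A (TArr B C)) (TArr (TProd A B) C))
            (fun f p => f (fst p) (snd p)).
Proof.
  exists (tlam _ _ _ (tlam _ _ _
    (tapp _ _ _ (tapp _ _ _ (tvar _ _ (vs _ _ _ (vz _ _))) (tfst _ _ _ (tvar _ _ (vz _ _))))
                (tsnd _ _ _ (tvar _ _ (vz _ _)))))).
  reflexivity.
Qed.

Lemma definable_case A B C :
  definable (TArr (TArr A C) (TArr (TArr B C) (TArr (TSum A B) C)))
            (fun f g s => match s with inl a => f a | inr b => g b end).
Proof.
  exists (tlam _ _ _ (tlam _ _ _ (tlam _ _ _
    (tmatch _ _ _ _ (tvar _ _ (vz _ _))
       (tapp _ _ _ (tvar _ _ (vs _ _ _ (vs _ _ _ (vs _ _ _ (vz _ _))))) (tvar _ _ (vz _ _)))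
       (tapp _ _ _ (tvar _ _ (vs _ _ _ (vs _ _ _ (vz _ _)))) (tvar _ _ (vz _ _))))))).
  reflexivity.
Qed.

Lemma definable_absurd C : definable (TArr TEmpty C) (fun e => match e with end).
Proof. now exists (tlam _ _ _ (tabsurd _ _ (tvar _ _ (vz _ _)))). Qed.

Lemma definable_probe_at A B C :
  definable (TArr (TArr B (TArr (TArr A B) C)) (TArr A (TArr (TArr A B) C)))
            (fun h a g => h (g a) g).
Proof.
  exists (tlam _ _ _ (tlam _ _ _ (tlam _ _ _
    (tapp _ _ _ (tapp _ _ _ (tvar _ _ (vs _ _ _ (vs _ _ _ (vz _ _))))
                            (tapp _ _ _ (tvar _ _ (vz _ _)) (tvar _ _ (vs _ _ _ (vz _ _)))))
                (tvar _ _ (vz _ _)))))).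
  reflexivity.
Qed.

Lemma all_definable_arrow A B :
  case_definable A -> all_definable B -> all_definable (TArr A B).
Proof. intros CA RB v. apply CA. intros a. apply RB. Qed.

Lemma all_definable_prod A B :
  all_definable A -> all_definable B -> all_definable (TProd A B).
Proof. intros RA RB [a b]. now apply definable_pair. Qed.

Lemma all_definable_sum A B :
  all_definable A -> all_definable B -> all_definable (TSum A B).
Proof. intros RA RB [a|b]; [apply definable_inl | apply definable_inr]; auto. Qed.

Lemma all_definable_unit : all_definable TUnit.
Proof. intros []. now exists (tunit []). Qed.

Lemma all_definable_empty : all_definable TEmpty.
Proof. intros []. Qed.

Lemma definable_probe A B C (l : list (sem rho A)) :
  all_definable A -> case_definable B ->
  forall Phi : list (sem rho B) -> sem rho C, (forall bs, definable C (Phi bs)) ->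
  definable (TArr (TArr A B) C) (fun g => Phi (map g l)).
Proof.
  intros RA CB. induction l as [|a l IH]; intros Phi HPhi.
  - exact (definable_app _ _ _ _ (definable_const _ _) (HPhi [])).
  - assert (Hstep : definable (TArr B (TArr (TArr A B) C))
                      (fun b g => Phi (b :: map g l))).
    { apply CB. intros b. apply (IH (fun bs => Phi (b :: bs))). intros bs. apply HPhi. }
    exact (definable_app _ _ _ _
             (definable_app _ _ _ _ (definable_probe_at A B C) Hstep) (RA a)).
Qed.

Lemma case_definable_arrow A B :
  enumerable (sem rho A) -> all_definable A -> case_definable B ->
  case_definable (TArr A B).
Proof.
  intros [l Hl] RA CB C F HF.
  destruct (classic (inhabited (sem rho A -> sem rho B))) as [i|Hempty].
  - set (Phi bs := F (epsilon i (fun h => map h l = bs))).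
    replace F with (fun g => Phi (map g l)).
    + apply definable_probe; [assumption | assumption |].
      intros bs. apply HF.
    + apply functional_extensionality. intros g. unfold Phi.
      now rewrite (epsilon_map_complete l i g Hl).
  - destruct l as [|a l].
    { exfalso. apply Hempty. constructor. intros x. destruct (Hl x). }
    assert (Hvacuous : definable (TArr B (TArr (TArr A B) C)) (fun _ => F)).
    { apply CB. intros b. exfalso. apply Hempty. now constructor. }
    exact (definable_app _ _ _ _
             (definable_app _ _ _ _ (definable_probe_at A B C) Hvacuous) (RA a)).
Qed.

Lemma case_definable_prod A B :
  case_definable A -> case_definable B -> case_definable (TProd A B).
Proof.
  intros CA CB C F HF.
  assert (Hcurry : definable (TArr A (TArr B C)) (fun a b => F (a, b))).
  { apply CA. intros a. apply CB. intros b. apply HF. }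
  replace F with (fun p : sem rho A * sem rho B => F (fst p, snd p)).
  - exact (definable_app _ _ _ _ (definable_uncurry A B C) Hcurry).
  - apply functional_extensionality. now intros [a b].
Qed.

Lemma case_definable_sum A B :
  case_definable A -> case_definable B -> case_definable (TSum A B).
Proof.
  intros CA CB C F HF.
  assert (Hl : definable (TArr A C) (fun a => F (inl a))) by (apply CA; auto).
  assert (Hr : definable (TArr B C) (fun b => F (inr b))) by (apply CB; auto).
  replace F with (fun s : sem rho A + sem rho B =>
                    match s with inl a => F (inl a) | inr b => F (inr b) end).
  - exact (definable_app _ _ _ _ (definable_app _ _ _ _ (definable_case A B C) Hl) Hr).
  - apply functional_extensionality. now intros [a|b].
Qed.

Lemma case_definable_unit : case_definable TUnit.
Proof.
  intros C F HF. replace F with (fun _ : unit => F tt).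
  - exact (definable_app _ _ _ _ (definable_const _ _) (HF tt)).
  - apply functional_extensionality. now intros [].
Qed.

Lemma case_definable_empty : case_definable TEmpty.
Proof.
  intros C F _. replace F with (fun e : Empty_set => match e with end : sem rho C).
  - apply definable_absurd.
  - apply functional_extensionality. intros [].
Qed.

Lemma closed_ty_definable A :
  closed_ty A = true ->
  enumerable (sem rho A) /\ all_definable A /\ case_definable A.
Proof.
  induction A as [n|A IHA B IHB|A IHA B IHB| |A IHA B IHB|]; simpl; intros Hclosed.
  - discriminate.
  - apply andb_prop in Hclosed as [HA HB].
    destruct (IHA HA) as (EA & RA & CA), (IHB HB) as (EB & RB & CB).
    split; [|split].
    + now apply enumerable_arrow.
    + now apply all_definable_arrow.
    + now apply case_definable_arrow.
  - apply andb_prop in Hclosed as [HA HB].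
    destruct (IHA HA) as (EA & RA & CA), (IHB HB) as (EB & RB & CB).
    split; [|split].
    + now apply enumerable_prod.
    + now apply all_definable_prod.
    + now apply case_definable_prod.
  - exact (conj enumerable_unit (conj all_definable_unit case_definable_unit)).
  - apply andb_prop in Hclosed as [HA HB].
    destruct (IHA HA) as (EA & RA & CA), (IHB HB) as (EB & RB & CB).
    split; [|split].
    + now apply enumerable_sum.
    + now apply all_definable_sum.
    + now apply case_definable_sum.
  - exact (conj enumerable_Empty_set (conj all_definable_empty case_definable_empty)).
Qed.

End Definability.

Theorem mainTheorem7 :
  forall (A : ty), closed_ty A = true ->
  forall (rho : nat -> Type) (v : sem rho A),
  exists t : tm [] A, denote (rho := rho) t = v.
Proof.
  intros A HA rho v.
  destruct (closed_ty_definable rho A HA) as (_ & RA & _).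
  exact (RA v).
Qed.
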